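(* Let $A$ be a finite nonempty set and $Q\subseteq\mathrm{Rel}(A)$. The following are equivalent: (i) $\mathrm{Pol}\,Q=(\mathrm{End}\,Q)^{*}$; (ii) there exists $Q'\subseteq\mathrm{gQuord}(A)$ with $\mathrm{Pol}\,Q=\mathrm{Pol}\,Q'$; (ii)$'$ there exists $Q'\subseteq\mathrm{gQuord}(A)$ with $[Q]_{\exists,\wedge,=}=[Q']_{\exists,\wedge,=}$; (ii)$''$ $[Q]_{\exists,\wedge,=}=\big[[Q]_{\exists,\wedge,=}\cap\mathrm{gQuord}(A)\big]_{\exists,\wedge,=}$.
   Context: $\mathrm{Rel}(A)$ is the set of all finitary relations on $A$. An operation preserves a relation if componentwise application to tuples of the relation yields a tuple of the relation; $\mathrm{Pol}\,Q$ (resp. $\mathrm{End}\,Q$) is the set of all finitary operations (resp. unary maps) preserving every relation in $Q$. A translation of an $n$-ary $f$ is a unary map $x\mapsto f(a_1,\dots,a_{i-1},x,a_{i+1},\dots,a_n)$ with fixed $a_j\in A$; $\mathrm{trl}(f)$ is the set of translations ($\{f\}$ for unary $f$); $M^*:=\{f\mid\mathrm{trl}(f)\subseteq M\}$ for $M\subseteq A^A$. A relation $\rho\subseteq A^m$ is a generalized quasiorder if it is reflexive and for every $m\times m$-matrix over $A$ whose rows and columns all lie in $\rho$, its diagonal lies in $\rho$; $\mathrm{gQuord}(A)$ is the set of all generalized quasiorders on $A$. $[Q]_{\exists,\wedge,=}$ is the relational clone generated by $Q$, i.e., the set of relations definable from $Q$ by primitive positive formulas (using only relation symbols, equality, $\exists$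 and $\wedge$). *)

From mathcomp Require Import all_boot.
Set Implicit Arguments. Unset Strict Implicit. Unset Printing Implicit Defensive.

Section Defs.
Variable A : finType.

(* A finitary relation on A: an arity m >= 1 and a set of m-tuples
   (tuples are finite functions 'I_m -> A). Rel(A) = all such records;
   subsets of Rel(A) are predicates relA -> Prop. *)
Record relA := RelA { rar : nat; rar_gt0 : 0 < rar;
                      rset : {set {ffun 'I_rar -> A}} }.

Record opA := OpA { oar : nat; oar_gt0 : 0 < oar;
                    ofun : {ffun 'I_oar -> A} -> A }.

Definition preserves (f : opA) (rho : relA) : Prop :=
  forall r : 'I_(oar f) -> {ffun 'I_(rar rho) -> A},
    (forall j, r j \in rset rho) ->
    [ffun i : 'I_(rar rho) => @ofun f [ffun j : 'I_(oar f) => r j i]] \in rset rho.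

Definition Pol (Q : relA -> Prop) (f : opA) : Prop :=
  forall rho, Q rho -> preserves f rho.

Definition End_ (Q : relA -> Prop) (g : A -> A) : Prop :=
  forall rho, Q rho -> forall r, r \in rset rho -> [ffun i => g (r i)] \in rset rho.

Definition translation (f : opA) (i : 'I_(oar f)) (a : 'I_(oar f) -> A)
  : A -> A := fun x => @ofun f [ffun j : 'I_(oar f) => if j == i then x else a j].

Definition star (M : (A -> A) -> Prop) (f : opA) : Prop :=
  forall i a, M (@translation f i a).

Definition gQuord (rho : relA) : Prop :=
  (forall x : A, [ffun _ => x] \in rset rho) /\
  (forall M : 'I_(rar rho) -> 'I_(rar rho) -> A,
     (forall i, [ffun j => M i j] \in rset rho) ->
     (forall j, [ffun i => M i j] \in rset rho) ->
     [ffun i => M i i] \in rset rho).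

Inductive ppf : Type :=
  | PFalse : ppf
  | PEq : nat -> nat -> ppf
  | PAtom : forall rho : relA, ('I_(rar rho) -> nat) -> ppf
  | PAnd : ppf -> ppf -> ppf
  | PEx : nat -> ppf -> ppf.

Fixpoint atoms_in (Q : relA -> Prop) (phi : ppf) : Prop :=
  match phi with
  | PFalse => True
  | PEq _ _ => True
  | PAtom rho _ => Q rho
  | PAnd p q => atoms_in Q p /\ atoms_in Q q
  | PEx _ p => atoms_in Q p
  end.

Fixpoint sat (s : nat -> A) (phi : ppf) : Prop :=
  match phi with
  | PFalse => False
  | PEq i j => s i = s j
  | PAtom rho v => [ffun k => s (v k)] \in rset rho
  | PAnd p q => sat s p /\ sat s q
  | PEx k p => exists x : A, sat (fun n => if n == k then x else s n) p
  end.

(* [Q]_{exists,/\,=}: relations defined by a pp-formula over Q, the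
   tuple being the values of the variables 0..m-1 (remaining free
   variables are existentially quantified). *)
Definition ppclone (Q : relA -> Prop) (rho : relA) : Prop :=
  exists phi : ppf, atoms_in Q phi /\
    forall r : {ffun 'I_(rar rho) -> A},
      r \in rset rho <->
      exists s : nat -> A, (forall i : 'I_(rar rho), s i = r i) /\ sat s phi.

End Defs.

From mathcomp Require Import all_boot.
From Stdlib Require Import ClassicalEpsilon.
Set Implicit Arguments. Unset Strict Implicit. Unset Printing Implicit Defensive.

(* A generalized quasiorder is preserved by an operation as soon as it is
   preserved by all translations of the operation (substitute the arguments
   one at a time), so Pol Q' = (End Q')^* whenever Q' consists of generalized
   quasiorders, and this passes to every Q with Pol Q = Pol Q' because End is
   determined by Pol.  Conversely, if Pol Q = (End Q)^*, the relation of all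
   tuples (g a)_(a in A) with g in End Q is a generalized quasiorder with the
   same polymorphisms as Q.  The variants (ii)' and (ii)'' follow from the
   Galois correspondence [Q]_{exists,/\,=} = Inv Pol Q, obtained by the
   classical construction of a pp-formula with a variable for each element of
   A^|rho|. *)

Definition asbool (P : Prop) : bool :=
  if excluded_middle_informative P then true else false.

Lemma asboolP (P : Prop) : reflect P (asbool P).
Proof. by rewrite /asbool; case: excluded_middle_informative => p; constructor. Qed.

Section Clones.
Variable A : finType.
Implicit Types (Q : relA A -> Prop) (rho : relA A) (f : opA A) (g : A -> A).

Lemma eq_mem_rset rho (r r' : {ffun 'I_(rar rho) -> A}) :
  r =1 r' -> r \in rset rho -> r' \in rset rho.
Proof. by move/ffunP ->. Qed.

Definition preserves1 g rho :=
  forall r, r \in rset rho -> [ffun i => g (r i)] \in rset rho.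

Lemma eq_preserves1 g (h : A -> A) rho : g =1 h -> preserves1 g rho -> preserves1 h rho.
Proof.
by move=> eq_gh gP r /gP; apply: eq_mem_rset => i; rewrite !ffunE eq_gh.
Qed.

Lemma eq_End Q g (h : A -> A) : g =1 h -> End_ Q g -> End_ Q h.
Proof. by move=> eq_gh gE rho /gE; apply: eq_preserves1. Qed.

Lemma End_id Q : End_ Q id.
Proof. by move=> rho _ r; apply: eq_mem_rset => i; rewrite ffunE. Qed.

Lemma End_comp Q g (h : A -> A) : End_ Q g -> End_ Q h -> End_ Q (g \o h).
Proof.
move=> gE hE rho Qrho r /(hE _ Qrho) /(gE _ Qrho).
by apply: eq_mem_rset => i; rewrite !ffunE.
Qed.

Definition unop g : opA A := @OpA A 1 isT (fun x => g (x ord0)).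

Definition binop (g : A -> A -> A) : opA A :=
  @OpA A 2 isT (fun x => g (x ord0) (x ord_max)).

Lemma End_Pol_unop Q g : End_ Q g <-> Pol Q (unop g).
Proof.
split=> [gE rho Qrho r rP | gP rho Qrho r rP].
- have := gE _ Qrho _ (rP ord0).
  by apply: eq_mem_rset => i; rewrite !ffunE /= ffunE.
- have := gP _ Qrho (fun=> r) (fun=> rP).
  by apply: eq_mem_rset => i; rewrite !ffunE /= ffunE.
Qed.

Lemma Pol_End_diag Q f : Pol Q f -> End_ Q (fun x => @ofun _ f [ffun=> x]).
Proof.
move=> fP rho Qrho r rP; have := fP _ Qrho (fun=> r) (fun=> rP).
by apply: eq_mem_rset => i; rewrite !ffunE; congr (@ofun _ f _).
Qed.

Lemma Pol_binop_fst Q : Pol Q (binop (fun x _ => x)).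
Proof.
move=> rho _ r rP; have := rP ord0.
by apply: eq_mem_rset => i /=; rewrite !ffunE.
Qed.

Lemma star_binop Q (g : A -> A -> A) :
  star (End_ Q) (binop g) <-> (forall x, End_ Q (g x)) /\ (forall y, End_ Q (g^~ y)).
Proof.
split=> [gS | [gxE gyE] i a].
- split=> [x | y].
  + by apply: eq_End (gS ord_max (fun=> x)) => z; rewrite /translation /= !ffunE.
  + by apply: eq_End (gS ord0 (fun=> y)) => z; rewrite /translation /= !ffunE.
- have [->|->] : i = ord0 \/ i = ord_max.
    by case: i => [[|[|//]] ?]; [left|right]; apply: val_inj.
  + by apply: eq_End (gyE (a ord_max)) => z; rewrite /translation /= !ffunE.
  + by apply: eq_End (gxE (a ord0)) => z; rewrite /translation /= !ffunE.
Qed.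

Lemma eq_sat (s s' : nat -> A) (phi : ppf A) : s =1 s' -> sat s phi -> sat s' phi.
Proof.
elim: phi s s' => [|i j|rho v|p IHp q IHq|k p IHp] s s' eq_s //=.
- by rewrite -!eq_s.
- by apply: eq_mem_rset => i; rewrite !ffunE eq_s.
- by case=> sp sq; split; [exact: IHp sp|exact: IHq sq].
- by case=> x sx; exists x; apply: IHp sx => n; case: (n == k).
Qed.

Lemma sat_Pol Q f (phi : ppf A) (s : 'I_(oar f) -> nat -> A) :
  Pol Q f -> atoms_in Q phi -> (forall j, sat (s j) phi) ->
  sat (fun n => @ofun _ f [ffun j => s j n]) phi.
Proof.
move=> fP; elim: phi s => [|a b|rho v|p IHp q IHq|k p IHp] s /= Qphi sat_s.
- exact: sat_s (Ordinal (oar_gt0 f)).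
- by congr (@ofun _ f _); apply/ffunP => j; rewrite !ffunE sat_s.
- by apply: eq_mem_rset (fP _ Qphi _ sat_s) => i; rewrite !ffunE; congr (@ofun _ f _);
    apply/ffunP => j; rewrite !ffunE.
- by case: Qphi => Qp Qq; split; [apply: IHp | apply: IHq] => // j; case: (sat_s j).
- have /fin_all_exists [x sx] := sat_s.
  exists (@ofun _ f [ffun j => x j]).
  by apply: eq_sat (IHp _ Qphi sx) => n; case: (n == k).
Qed.

Lemma Pol_ppclone Q f rho : Pol Q f -> ppclone Q rho -> preserves f rho.
Proof.
move=> fP [phi [Qphi rhoE]] r rP.
have /fin_all_exists [s s_r] j := proj1 (rhoE _) (rP j).
apply/rhoE; exists (fun n => @ofun _ f [ffun j => s j n]); split.
- move=> i; rewrite ffunE; congr (@ofun _ f _); apply/ffunP => j.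
  by rewrite !ffunE (proj1 (s_r j)).
- by apply: sat_Pol fP Qphi _ => j; case: (s_r j).
Qed.

Lemma mem_ppclone Q rho : Q rho -> ppclone Q rho.
Proof.
move=> Qrho; pose i0 := Ordinal (rar_gt0 rho).
exists (PAtom (fun i : 'I_(rar rho) => val i)); split=> // r; split=> [rP | [s [s_r /=]]].
- exists (fun n => r (insubd i0 n)); split=> [i|]; first by rewrite valKd.
  by apply: eq_mem_rset rP => i; rewrite ffunE valKd.
- by apply: eq_mem_rset => i; rewrite ffunE s_r.
Qed.

Lemma Pol_sub_ppclone Q Q' f :
  (forall rho, Q' rho -> ppclone Q rho) -> Pol Q f -> Pol Q' f.
Proof. by move=> Q'Q fP rho /Q'Q; apply: Pol_ppclone. Qed.

Definition pp_conj (T : Type) (l : seq T) (phi : T -> ppf A) : ppf A :=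
  foldr (fun x => PAnd (phi x)) (PEq A 0 0) l.

Lemma sat_pp_conj (T : eqType) s (l : seq T) phi :
  sat s (pp_conj l phi) <-> forall x, x \in l -> sat s (phi x).
Proof.
elim: l => [|y l IHl] /=; first by split.
split=> [[sy /IHl sl] x | sl]; first by rewrite inE => /predU1P [->|/sl].
by split; [apply: sl; rewrite mem_head | apply/IHl => x lx; apply: sl; rewrite inE lx orbT].
Qed.

Lemma atoms_pp_conj Q (T : eqType) (l : seq T) phi :
  (forall x, x \in l -> atoms_in Q (phi x)) -> atoms_in Q (pp_conj l phi).
Proof.
elim: l => [|y l IHl] //= Qphi; split; first by apply: Qphi; rewrite mem_head.
by apply: IHl => x lx; apply: Qphi; rewrite inE lx orbT.
Qed.

Section InvPol.
Variables (Q : relA A -> Prop) (rho : relA A).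
Hypothesis Pol_preserves : forall f, Pol Q f -> preserves f rho.
Local Notation m := (rar rho).
Local Notation N := #|rset rho|.
Local Notation X := {ffun 'I_N -> A}.

Definition atomX := {sigma : relA A & 'I_(rar sigma) -> X}.

Definition holds (h : X -> A) (c : atomX) : bool :=
  [ffun j => h (projT2 c j)] \in rset (projT1 c).

Definition valid (c : atomX) := Q (projT1 c) /\ forall k : 'I_N, holds (fun x => x k) c.

Definition violated (h : X -> A) : option atomX :=
  match excluded_middle_informative (exists c, valid c /\ ~~ holds h c) with
  | left ex_c => Some (proj1_sig (constructive_indefinite_description _ ex_c))
  | right _ => None
  end.

Lemma violatedP (h : X -> A) :
  if violated h is Some c then valid c /\ ~~ holds h c
  else forall c, valid c -> holds h c.
Proof.
rewrite /violated; case: excluded_middle_informative => [ex_c | no_c].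
  exact: proj2_sig (constructive_indefinite_description _ ex_c).
by move=> c cV; apply/negPn/negP => hc; apply: no_c; exists c.
Qed.

Lemma Pol_of_valid (N_gt0 : 0 < N) (h : X -> A) :
  (forall c, valid c -> holds h c) -> Pol Q (OpA N_gt0 h).
Proof.
move=> hV sigma Qsigma r rP.
apply: (hV (existT _ sigma (fun j => [ffun k => r k j]))).
by split=> // k; apply: eq_mem_rset (rP k) => j; rewrite !ffunE.
Qed.

Definition var (x : X) : nat := m + enum_rank x.

Definition col (i : 'I_m) : X := [ffun k => (enum_val k : {ffun 'I_m -> A}) i].

Definition atom_formula (c : atomX) : ppf A := PAtom (fun j => var (projT2 c j)).

Definition violated_formula (h : X -> A) : ppf A :=
  if violated h is Some c then atom_formula c else PEq A 0 0.

(* The variables [var x] range over the coordinates of an N-ary operation h,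
   N = #|rho|.  Every h violating some atom over Q is excluded, so a satisfying
   assignment is a polymorphism of Q; applied to the N tuples of rho, whose
   columns are the [col i], it yields the tuple held by the variables 0..m-1. *)
Definition Inv_Pol_formula : ppf A :=
  PAnd (pp_conj (enum 'I_m) (fun i => PEq A i (var (col i))))
       (pp_conj (enum {ffun X -> A}) (fun h => violated_formula h)).

Lemma atoms_Inv_Pol_formula : atoms_in Q Inv_Pol_formula.
Proof.
split; apply: atoms_pp_conj => // h _; rewrite /violated_formula.
by move: (violatedP h); case: (violated h) => [c [[]]|].
Qed.

Lemma sat_Inv_Pol_formula r : r \in rset rho ->
  exists s : nat -> A, (forall i : 'I_m, s i = r i) /\ sat s Inv_Pol_formula.
Proof.
move=> rP; pose k0 := enum_rank_in rP r.
have k0_r : enum_val k0 = r := enum_rankK_in rP rP.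
pose i0 := Ordinal (rar_gt0 rho).
pose s n := if n < m then r (insubd i0 n)
            else (enum_val (insubd (enum_rank (col i0)) (n - m)) : X) k0.
have s_var x : s (var x) = x k0.
  by rewrite /s /var ltnNge leq_addr /= addKn valKd enum_rankK.
have s_r (i : 'I_m) : s i = r i by rewrite /s ltn_ord valKd.
exists s; split=> //; split; apply/sat_pp_conj.
  by move=> i _ /=; rewrite s_var s_r /col ffunE k0_r.
move=> h _; move: (violatedP h); rewrite /violated_formula.
case: (violated h) => // c [[_ cV] _].
by apply: eq_mem_rset (cV k0) => j; rewrite !ffunE s_var.
Qed.

Lemma mem_of_sat_Inv_Pol_formula (N_gt0 : 0 < N) (r : {ffun 'I_m -> A}) (s : nat -> A) :
  (forall i : 'I_m, s i = r i) -> sat s Inv_Pol_formula -> r \in rset rho.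
Proof.
move=> s_r [/sat_pp_conj s_col /sat_pp_conj s_violated].
pose h : {ffun X -> A} := [ffun x => s (var x)].
have hV c : valid c -> holds h c.
  move: (violatedP h) (s_violated h (mem_enum _ h)); rewrite /violated_formula.
  case: (violated h) => [c' [_ /negP not_hc'] s_c' _ | hV _]; last exact: hV.
  by case: not_hc'; apply: eq_mem_rset s_c' => j; rewrite !ffunE.
have := Pol_preserves (@Pol_of_valid N_gt0 _ hV) (fun k => enum_valP k).
apply: eq_mem_rset => i; rewrite !ffunE /= -s_r (s_col i (mem_enum _ i)).
by rewrite ffunE.
Qed.

Lemma ppclone_of_Pol_preserves : ppclone Q rho.
Proof.
have [N0 | N_gt0] := posnP N.
  exists (PFalse A); split=> // r; split=> [|[s [_ []]]].
  by rewrite (card0_eq N0).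
exists Inv_Pol_formula; split; first exact: atoms_Inv_Pol_formula.
move=> r; split; first exact: sat_Inv_Pol_formula.
by case=> s [s_r sat_s]; apply: mem_of_sat_Inv_Pol_formula s_r sat_s.
Qed.

End InvPol.

Lemma ppclone_eq_of_Pol_eq Q Q' : (forall f, Pol Q f <-> Pol Q' f) ->
  forall rho, ppclone Q rho <-> ppclone Q' rho.
Proof.
move=> PolE rho; split=> rhoP; apply: ppclone_of_Pol_preserves => f /PolE fP;
  exact: Pol_ppclone fP rhoP.
Qed.

Lemma Pol_eq_of_ppclone_eq Q Q' : (forall rho, ppclone Q rho <-> ppclone Q' rho) ->
  forall f, Pol Q f <-> Pol Q' f.
Proof.
by move=> ppE f; split; apply: Pol_sub_ppclone => rho /mem_ppclone /ppE.
Qed.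

Lemma Pol_eq_ppclone_meet Q Q' (P : relA A -> Prop) :
  (forall rho, Q' rho -> P rho) -> (forall f, Pol Q f <-> Pol Q' f) ->
  forall f, Pol Q f <-> Pol (fun sigma => ppclone Q sigma /\ P sigma) f.
Proof.
move=> Q'P PolE f; split=> [|fP]; first by apply: Pol_sub_ppclone => sigma [].
apply/PolE => sigma Q'sigma; apply: fP; split; last exact: Q'P.
exact/(ppclone_eq_of_Pol_eq PolE)/mem_ppclone.
Qed.

Section GeneralizedQuasiorder.
Variables (rho : relA A) (f : opA A).
Hypothesis rho_gQuord : gQuord rho.
Local Notation m := (rar rho).
Local Notation n := (oar f).

Lemma preserves1_translation i a :
  preserves f rho -> preserves1 (@translation _ f i a) rho.
Proof.
move=> fP r rP.
have rowsP j : (if j == i then r else [ffun=> a j]) \in rset rho.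
  by case: (j == i) => //; apply: rho_gQuord.1.
apply: eq_mem_rset (fP _ rowsP) => i'; rewrite !ffunE /translation.
by congr (@ofun _ f _); apply/ffunP => j; rewrite !ffunE; case: (j == i); rewrite ?ffunE.
Qed.

Definition partial_apply (r : 'I_n -> {ffun 'I_m -> A}) (k : nat) (c : 'I_n -> A) :
  {ffun 'I_m -> A} :=
  [ffun i => @ofun _ f [ffun j : 'I_n => if j < k then r j i else c j]].

(* Arguments are substituted one at a time: [partial_apply r k.+1 c] is the
   diagonal of a matrix whose rows are images of r_k under translations and
   whose columns are instances of [partial_apply r k]. *)
Lemma partial_apply_mem r :
  (forall i a, preserves1 (@translation _ f i a) rho) -> (forall j, r j \in rset rho) ->
  forall k c, partial_apply r k c \in rset rho.
Proof.
move=> trP rP; elim=> [|k IHk] c.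
  apply: eq_mem_rset (rho_gQuord.1 (@ofun _ f [ffun j => c j])) => i.
  by rewrite !ffunE; congr (@ofun _ f _); apply/ffunP => j; rewrite !ffunE.
have [k_lt_n | n_le_k] := ltnP k n; last first.
  apply: eq_mem_rset (IHk c) => i; rewrite !ffunE; congr (@ofun _ f _).
  apply/ffunP => j; rewrite !ffunE.
  by have j_lt_k := leq_trans (ltn_ord j) n_le_k; rewrite j_lt_k ltnS ltnW.
pose kk := Ordinal k_lt_n.
pose M i i' := @ofun _ f
  [ffun j : 'I_n => if j < k then r j i else if j == kk then r kk i' else c j].
have M_row i : [ffun i' => M i i'] \in rset rho.
  apply: eq_mem_rset (trP kk (fun j => if j < k then r j i else c j) _ (rP kk)) => i'.
  rewrite !ffunE /M /translation; congr (@ofun _ f _); apply/ffunP => j; rewrite !ffunE.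
  by case: eqP => [->|_] //; rewrite ltnn.
have M_col i' : [ffun i => M i i'] \in rset rho.
  apply: eq_mem_rset (IHk (fun j => if j == kk then r kk i' else c j)) => i.
  by rewrite !ffunE.
apply: eq_mem_rset (rho_gQuord.2 M M_row M_col) => i; rewrite !ffunE /M.
congr (@ofun _ f _); apply/ffunP => j; rewrite !ffunE.
case: (ltngtP j k) => [j_lt_k | k_lt_j | j_k].
- by rewrite ltnS (ltnW j_lt_k).
- by rewrite ltnS leqNgt k_lt_j -val_eqE /= gtn_eqF.
- have -> : j = kk by apply: val_inj.
  by rewrite /= ltnSn eqxx.
Qed.

Lemma gQuord_preserves_translations :
  preserves f rho <-> forall i a, preserves1 (@translation _ f i a) rho.
Proof.
split=> [fP i a | trP r rP]; first exact: preserves1_translation.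
apply: eq_mem_rset (partial_apply_mem trP rP n (fun j => r j (Ordinal (rar_gt0 rho)))).
by move=> i; rewrite !ffunE; congr (@ofun _ f _); apply/ffunP => j; rewrite !ffunE ltn_ord.
Qed.

End GeneralizedQuasiorder.

Lemma Pol_star_End_of_gQuord Q : (forall rho, Q rho -> gQuord rho) ->
  forall f, Pol Q f <-> star (End_ Q) f.
Proof.
move=> Q_gQuord f; split=> [fP i a rho Qrho | fS rho Qrho].
  exact: (gQuord_preserves_translations _ (Q_gQuord _ Qrho)).1 (fP _ Qrho) i a.
by apply/(gQuord_preserves_translations _ (Q_gQuord _ Qrho)) => i a; apply: fS.
Qed.

Lemma star_End_eq_of_Pol_eq Q Q' : (forall f, Pol Q f <-> Pol Q' f) ->
  forall f, star (End_ Q) f <-> star (End_ Q') f.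
Proof.
by move=> PolE f; split=> fS i a; apply/End_Pol_unop/PolE/End_Pol_unop/fS.
Qed.

Section EndGraph.
Variables (Q : relA A -> Prop) (A_gt0 : 0 < #|A|).

Definition End_graph : relA A := @RelA A #|A| A_gt0
  [set t : {ffun 'I_#|A| -> A} |
     asbool (exists2 g, End_ Q g & forall i, t i = g (enum_val i))].

Lemma End_graphP (t : {ffun 'I_#|A| -> A}) :
  reflect (exists2 g, End_ Q g & forall i, t i = g (enum_val i))
          (t \in rset End_graph).
Proof. by rewrite inE; apply: asboolP. Qed.

Lemma preserves1_End_graph g : preserves1 g End_graph <-> End_ Q g.
Proof.
split=> [gP | gE t /End_graphP [h hE t_h]].
  have /gP/End_graphP [h hE gh] : [ffun i => enum_val i] \in rset End_graph.
    by apply/End_graphP; exists id; [exact: End_id | move=> i; rewrite ffunE].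
  by apply: eq_End hE => x; move: (gh (enum_rank x)); rewrite !ffunE enum_rankK.
by apply/End_graphP; exists (g \o h); [exact: End_comp | move=> i; rewrite ffunE t_h].
Qed.

Hypothesis Pol_star_End : forall f, Pol Q f <-> star (End_ Q) f.

Lemma End_const c : End_ Q (fun=> c).
Proof.
have fst_star := (Pol_star_End _).1 (Pol_binop_fst (Q:=Q)).
by have [fstE _] := (star_binop Q (fun x _ => x)).1 fst_star; apply: fstE.
Qed.

(* The matrix, read as a binary operation, has the row and column tuples as
   translations, so it is a polymorphism, and its diagonal an endomorphism. *)
Lemma gQuord_End_graph : gQuord End_graph.
Proof.
split=> [x | M M_row M_col].
  by apply/End_graphP; exists (fun=> x); [exact: End_const | move=> i; rewrite ffunE].
have [g gE g_M] := fin_all_exists2 (fun i => elimT (End_graphP _) (M_row i)).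
have [h hE h_M] := fin_all_exists2 (fun j => elimT (End_graphP _) (M_col j)).
pose F := binop (fun x y => M (enum_rank x) (enum_rank y)).
have F_Pol : Pol Q F.
  apply/Pol_star_End/star_binop; split=> [x | y].
    by apply: eq_End (gE (enum_rank x)) => y; move: (g_M (enum_rank x) (enum_rank y));
      rewrite ffunE enum_rankK.
  by apply: eq_End (hE (enum_rank y)) => x; move: (h_M (enum_rank y) (enum_rank x));
    rewrite ffunE enum_rankK.
apply/End_graphP; exists (fun x => @ofun _ F [ffun=> x]); first exact: Pol_End_diag.
by move=> i; rewrite !ffunE /= !ffunE enum_valK.
Qed.

Lemma Pol_End_graph f : Pol Q f <-> preserves f End_graph.
Proof.
rewrite (gQuord_preserves_translations _ gQuord_End_graph).
split=> [/Pol_star_End fS i a | trP]; first exact/preserves1_End_graph/fS.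
by apply/Pol_star_End => i a; apply/preserves1_End_graph/trP.
Qed.

End EndGraph.

End Clones.

Theorem proposition4p4 (A : finType) (A_nonempty : 0 < #|A|)
    (Q : relA A -> Prop) :
  let i_ := forall f : opA A, Pol Q f <-> star (End_ Q) f in
  let ii := exists Q' : relA A -> Prop,
      (forall rho, Q' rho -> gQuord rho) /\
      (forall f : opA A, Pol Q f <-> Pol Q' f) in
  let ii' := exists Q' : relA A -> Prop,
      (forall rho, Q' rho -> gQuord rho) /\
      (forall rho, ppclone Q rho <-> ppclone Q' rho) in
  let ii'' := forall rho, ppclone Q rho <->
      ppclone (fun sigma => ppclone Q sigma /\ gQuord sigma) rho in
  (i_ <-> ii) /\ (i_ <-> ii') /\ (i_ <-> ii'').
Proof.
move=> i_ ii ii' ii''.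
have i_ii : i_ <-> ii.
  split=> [Pol_star_End | [Q' [Q'_gQuord PolE]] f].
    exists (fun sigma => sigma = End_graph Q A_nonempty); split=> [_ -> | f].
      exact: gQuord_End_graph.
    rewrite Pol_End_graph //; split=> [fP _ -> // | fP]; exact: fP.
  rewrite PolE Pol_star_End_of_gQuord //.
  exact: iff_sym (star_End_eq_of_Pol_eq PolE f).
have ii_ii' : ii <-> ii'.
  split=> -[Q' [Q'_gQuord Q'E]]; exists Q'; split=> //.
    exact: ppclone_eq_of_Pol_eq.
  exact: Pol_eq_of_ppclone_eq.
have ii_ii'' : ii <-> ii''.
  split=> [[Q' [Q'_gQuord PolE]] | ppE].
    exact/ppclone_eq_of_Pol_eq/(Pol_eq_ppclone_meet Q'_gQuord).
  exists (fun sigma => ppclone Q sigma /\ gQuord sigma); split=> [_ [] // | ].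
  exact: Pol_eq_of_ppclone_eq.
split; first exact: i_ii.
by split; [exact: iff_trans i_ii ii_ii' | exact: iff_trans i_ii ii_ii''].
Qed.
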